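(* There exist maps $f_r$ and $f_c$, where $f_r$ assigns to each $n\times n$ matrix $R$ with entries in $[0,1]$ a mixed strategy (probability distribution over rows) and $f_c$ assigns to each $n\times n$ matrix $C$ with entries in $[0,1]$ a mixed strategy (probability distribution over columns), such that for every $n$ and every bimatrix game $(R,C)$ with $R,C\in[0,1]^{n\times n}$, the profile $(f_r(R),f_c(C))$ is a $\frac{3}{4}$-approximate Nash equilibrium of $(R,C)$. (That is, a $\frac34$-approximate Nash equilibrium can be guaranteed even with no communication between the players.)
   Context: A bimatrix game $(R,C)$ consists of two $n\times n$ payoff matrices: $R$ for the row player, $C$ for the column player, with entries in $[0,1]$. Mixed strategies are probability vectors $\mathbf{x}$ (over rows) and $\mathbf{y}$ (over columns); payoffs are $\mathbf{x}^T R\mathbf{y}$ and $\mathbf{x}^T C\mathbf{y}$. Writing $\mathbf{e}_i$ for the $i$-th unit vector, $(\mathbf{x},\mathbf{y})$ is an $\epsilon$-approximate Nash equilibrium if for all $i$: $\mathbf{e}_i^T R\mathbf{y}\le \mathbf{x}^T R\mathbf{y}+\epsilon$ and $\mathbf{x}^T C\mathbf{e}_i\le \mathbf{x}^T C\mathbf{y}+\epsilon$. *)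

From HB Require Import structures.
From mathcomp Require Import all_boot all_order all_algebra.
From mathcomp Require Import reals.
Set Implicit Arguments. Unset Strict Implicit. Unset Printing Implicit Defensive.
Import Order.TTheory GRing.Theory Num.Theory.
Local Open Scope ring_scope.

Definition unit_matrix (R : realType) (n : nat) (A : 'M[R]_n) : Prop :=
  forall i j, 0 <= A i j /\ A i j <= 1.

Definition mixed_strategy (R : realType) (n : nat) (x : 'I_n -> R) : Prop :=
  (forall i, 0 <= x i) /\ \sum_(i < n) x i = 1.

Definition payoff (R : realType) (n : nat) (A : 'M[R]_n) (x y : 'I_n -> R) : R :=
  \sum_(i < n) \sum_(j < n) x i * A i j * y j.

Definition row_payoff (R : realType) (n : nat) (A : 'M[R]_n) (i : 'I_n) (y : 'I_n -> R) : R :=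
  \sum_(j < n) A i j * y j.
Definition col_payoff (R : realType) (n : nat) (A : 'M[R]_n) (x : 'I_n -> R) (j : 'I_n) : R :=
  \sum_(i < n) x i * A i j.

Definition approx_NE (R : realType) (n : nat) (eps : R) (Rm Cm : 'M[R]_n)
    (x y : 'I_n -> R) : Prop :=
  (forall i, row_payoff Rm i y <= payoff Rm x y + eps) /\
  (forall j, col_payoff Cm x j <= payoff Cm x y + eps).

(* Each player looks only at their own matrix: the row player puts weight 1/2 on a
   row [a] of maximal row sum [s] and spreads the other 1/2 uniformly, and the
   column player does the same with column sums.  Against such a [y], any pure row
   earns at most [1/2 + s/(2n)], while [x] earns at least [1/2] times the payoff of
   row [a], which is at least [s/(2n)].  The regret is thus at most
   [1/2 + s/(4n) <= 3/4] since [s <= n]. *)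
From HB Require Import structures.
From mathcomp Require Import all_boot all_order all_algebra.
From mathcomp Require Import reals.
From mathcomp Require Import ring lra.
Set Implicit Arguments. Unset Strict Implicit. Unset Printing Implicit Defensive.
Import Order.TTheory GRing.Theory Num.Theory.
Local Open Scope ring_scope.

Section HalfUniform.
Variable R : realType.

Definition row_sum n (A : 'M[R]_n) (i : 'I_n) : R := \sum_j A i j.

Definition half_uniform n (a : 'I_n) : 'I_n -> R :=
  fun i => (i == a)%:R / 2 + n%:R^-1 / 2.

Definition maximizer n (s : 'I_n -> R) : option 'I_n :=
  [pick k | [forall l, s l <= s k]].

Definition half_best n (s : 'I_n -> R) : 'I_n -> R :=
  if maximizer s is Some a then half_uniform a else fun _ => 0.

Lemma half_best_max n (s : 'I_n -> R) : (0 < n)%N ->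
  exists a, half_best s = half_uniform a /\ forall l, s l <= s a.
Proof.
move=> n_gt0; rewrite /half_best /maximizer; case: pickP => [a /forallP|none].
  by exists a.
have [a _ a_max] := @arg_maxP _ _ _ (Ordinal n_gt0) xpredT s erefl.
by exfalso; move/negbT/negP: (none a); apply; apply/forallP => l; exact: a_max.
Qed.

Lemma half_uniform_ge0 n (a : 'I_n) i : 0 <= half_uniform a i.
Proof. by rewrite /half_uniform addr_ge0 // divr_ge0 // invr_ge0 ler0n. Qed.

Lemma half_uniform_mixed n (a : 'I_n) : mixed_strategy (half_uniform a).
Proof.
split=> [i|]; first exact: half_uniform_ge0.
have n_neq0 : n%:R != 0 :> R.
  by rewrite pnatr_eq0 -lt0n (leq_ltn_trans (leq0n a) (ltn_ord a)).
rewrite big_split /= -!mulr_suml sumr_const card_ord (bigD1 a) //= eqxx.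
by rewrite big1 ?addr0 => [|i /negbTE ->//]; rewrite -[_ *+ n]mulr_natr mulVf //=; lra.
Qed.

Lemma payoff_sum_row n (A : 'M[R]_n) x y :
  payoff A x y = \sum_i x i * row_payoff A i y.
Proof.
apply: eq_bigr => i _; rewrite /row_payoff mulr_sumr.
by apply: eq_bigr => j _; rewrite mulrA.
Qed.

Lemma row_payoff_half_uniform n (A : 'M[R]_n) i (c : 'I_n) :
  row_payoff A i (half_uniform c) = A i c / 2 + row_sum A i * (n%:R^-1 / 2).
Proof.
rewrite /row_payoff /half_uniform; under eq_bigr do rewrite mulrDr.
rewrite big_split /= -mulr_suml (bigD1 c) //= eqxx big1 ?addr0; first by rewrite mul1r.
by move=> j /negbTE ->; rewrite mul0r mulr0.
Qed.

Lemma row_sum_le_dim n (A : 'M[R]_n) i : unit_matrix A -> row_sum A i <= n%:R.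
Proof.
move=> A01; rewrite -[n in n%:R]card_ord -sumr_const.
by apply: ler_sum => j _; exact: (A01 i j).2.
Qed.

Lemma row_sum_ge0 n (A : 'M[R]_n) i : unit_matrix A -> 0 <= row_sum A i.
Proof. by move=> A01; apply: sumr_ge0 => j _; exact: (A01 i j).1. Qed.

Lemma payoff_ge_half_row n (A : 'M[R]_n) (a : 'I_n) y : unit_matrix A ->
  (forall j, 0 <= y j) ->
  row_payoff A a y / 2 <= payoff A (half_uniform a) y.
Proof.
move=> A01 y_ge0; have row_ge0 i : 0 <= row_payoff A i y.
  by apply: sumr_ge0 => j _; rewrite mulr_ge0 // (A01 i j).1.
rewrite payoff_sum_row (bigD1 a) //= -[X in X <= _]addr0 lerD //; last first.
  by apply: sumr_ge0 => i _; rewrite mulr_ge0 // half_uniform_ge0.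
rewrite mulrC ler_wpM2r // /half_uniform eqxx mul1r lerDl.
by rewrite divr_ge0 // invr_ge0 ler0n.
Qed.

Lemma half_uniform_row_regret n (A : 'M[R]_n) (a c : 'I_n) i :
  unit_matrix A -> (forall l, row_sum A l <= row_sum A a) ->
  row_payoff A i (half_uniform c) <=
    payoff A (half_uniform a) (half_uniform c) + 3 / 4.
Proof.
move=> A01 a_max.
have n_gt0 : (0 < n)%N := leq_ltn_trans (leq0n a) (ltn_ord a).
set k := row_sum A a * (n%:R^-1 / 2).
have k_le : k <= 2^-1.
  have n_neq0 : n%:R != 0 :> R by rewrite pnatr_eq0 -lt0n.
  have : k <= n%:R * (n%:R^-1 / 2).
    by rewrite ler_wpM2r ?row_sum_le_dim // divr_ge0 // invr_ge0 ler0n.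
  by rewrite mulrA mulfV // mul1r.
have k_ge0 : 0 <= k.
  by rewrite /k mulr_ge0 ?row_sum_ge0 // divr_ge0 // invr_ge0 ler0n.
have deviation : row_payoff A i (half_uniform c) <= 2^-1 + k.
  rewrite row_payoff_half_uniform lerD //; first by have := (A01 i c).2; lra.
  by rewrite ler_wpM2r ?a_max // divr_ge0 // invr_ge0 ler0n.
have played : k / 2 <= payoff A (half_uniform a) (half_uniform c).
  have := payoff_ge_half_row a A01 (@half_uniform_ge0 _ c).
  by rewrite row_payoff_half_uniform -/k; have := (A01 a c).1; lra.
lra.
Qed.

Lemma unit_matrix_tr n (A : 'M[R]_n) : unit_matrix A -> unit_matrix A^T.
Proof. by move=> A01 i j; rewrite mxE. Qed.

Lemma payoff_tr n (A : 'M[R]_n) x y : payoff A x y = payoff A^T y x.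
Proof.
rewrite /payoff exchange_big; apply: eq_bigr => j _; apply: eq_bigr => i _.
by rewrite mxE; ring.
Qed.

Lemma col_payoff_tr n (A : 'M[R]_n) x j : col_payoff A x j = row_payoff A^T j x.
Proof. by apply: eq_bigr => i _; rewrite mxE mulrC. Qed.

End HalfUniform.

Theorem theorem1 (R : realType) :
  exists (fr : forall n : nat, 'M[R]_n -> ('I_n -> R))
         (fc : forall n : nat, 'M[R]_n -> ('I_n -> R)),
  forall (n : nat) (Rm Cm : 'M[R]_n), (0 < n)%N ->
    unit_matrix Rm -> unit_matrix Cm ->
    [/\ mixed_strategy (fr n Rm), mixed_strategy (fc n Cm)
      & approx_NE (3 / 4) Rm Cm (fr n Rm) (fc n Cm)].
Proof.
exists (fun n A => half_best (row_sum A)), (fun n A => half_best (row_sum A^T)).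
move=> n Rm Cm n_gt0 Rm01 Cm01.
have [a [-> a_max]] := half_best_max (row_sum Rm) n_gt0.
have [c [-> c_max]] := half_best_max (row_sum Cm^T) n_gt0.
split; [exact: half_uniform_mixed.. | split=> j].
  exact: half_uniform_row_regret.
rewrite col_payoff_tr payoff_tr.
exact/half_uniform_row_regret/c_max/unit_matrix_tr.
Qed.
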